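(* Each of the varieties $\mathsf{PSB}$, $\mathsf{PsC}$, $\mathsf{SIA}$ and $\mathsf{S^2IA}$ is closed under canonical extensions: if a conditional algebra $\langle A,\to\rangle$ belongs to one of them, then $\langle\mathcal{P}(\mathrm{Ul}(A)),\to_{T_A}\rangle$ belongs to the same variety.
   Context: A conditional algebra is $\langle A,\to\rangle$ with $A$ a Boolean algebra and $\to$ binary satisfying (C1) $a\to1=1$, (C2) $(a\to b)\wedge(a\to c)=a\to(b\wedge c)$, (C3) $(a\vee b)\to c\le(a\to c)\wedge(b\to c)$. Further equations: (C1* ) $0\to a=1$; (C3* ) $(a\to c)\wedge(b\to c)\le(a\vee b)\to c$; (C4) $a\to b\le c\to(a\to b)$; (C5) $a\wedge(a\to b)\le b$; (C6) $a\to b\le\neg b\to\neg a$; (C7) $\neg(a\to b)\le c\to\neg(a\to b)$; (C8) $(1\to(\neg a\vee b))\wedge(b\to c)\le a\to c$. $\mathsf{PSB}$ = conditional algebras satisfying C1*, C3*; $\mathsf{PsC}$ = $\mathsf{PSB}$ + C5, C6; $\mathsf{SIA}$ = $\mathsf{PSB}$ + C4, C5, C7, C8; $\mathsf{S^2IA}$ = $\mathsf{PSB}$ + C4, C5, C6, C7. Filters include the improper filter $A$; $\varphi(F)=\{u\in\mathrm{Ul}(A):F\subseteq u\}$; $D^{\to}_u(F)=\{b:\exists a\in F,\ a\to b\in u\}$; $T_A(u,Z,v)$ iff there is a filter $F$ with $Z=\varphi(F)$ and $D^{\to}_u(F)\subseteq v$; $T_A(u,Z)=\{v:T_A(u,Z,v)\}$;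 $U\to_{T_A}V=\{u:\forall Z\subseteq U,\ T_A(u,Z)\subseteq V\}$. *)

(* Boolean algebras are complemented distributive lattices
   with top and bottom (ctbDistrLatticeType); the powerset P(X) is the
   classical `set X`, which mathcomp-classical equips with that structure. *)
From HB Require Import structures.
From mathcomp Require Import all_boot all_order.
From mathcomp Require Import boolp classical_sets.
Import Order.TTheory.

Set Implicit Arguments.
Unset Strict Implicit.
Unset Printing Implicit Defensive.

Local Open Scope order_scope.

Section CondAlg.
Context {d : Order.disp_t} {T : ctbDistrLatticeType d}.
Variable imp : T -> T -> T.

Local Notation "a ~> b" := (imp a b) (at level 55, right associativity).
Local Notation neg := (@Order.compl d T).

Definition C1 : Prop := forall a, a ~> \top = \top.
Definition C2 : Prop := forall a b c, (a ~> b) `&` (a ~> c) = a ~> (b `&` c).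
Definition C3 : Prop := forall a b c, (a `|` b) ~> c <= (a ~> c) `&` (b ~> c).
Definition conditional_algebra : Prop := C1 /\ C2 /\ C3.

Definition C1s : Prop := forall a, \bot ~> a = \top.
Definition C3s : Prop := forall a b c, (a ~> c) `&` (b ~> c) <= (a `|` b) ~> c.
Definition C4 : Prop := forall a b c, a ~> b <= c ~> (a ~> b).
Definition C5 : Prop := forall a b, a `&` (a ~> b) <= b.
Definition C6 : Prop := forall a b, a ~> b <= neg b ~> neg a.
Definition C7 : Prop := forall a b c, neg (a ~> b) <= c ~> neg (a ~> b).
Definition C8 : Prop :=
  forall a b c, (\top ~> (neg a `|` b)) `&` (b ~> c) <= a ~> c.

Definition PSB : Prop := conditional_algebra /\ C1s /\ C3s.
Definition PsC : Prop := PSB /\ C5 /\ C6.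
Definition SIA : Prop := PSB /\ C4 /\ C5 /\ C7 /\ C8.
Definition S2IA : Prop := PSB /\ C4 /\ C5 /\ C6 /\ C7.

End CondAlg.

Section CanonicalExtension.
Context {d : Order.disp_t} {T : ctbDistrLatticeType d}.

(* filters (the improper filter T itself is a filter) *)
Definition is_filter (F : set T) : Prop :=
  [/\ F \top,
      (forall a b, F a -> a <= b -> F b) &
      (forall a b, F a -> F b -> F (a `&` b))].

Definition is_proper_filter (F : set T) : Prop := is_filter F /\ ~ F \bot.

Definition is_ultrafilter (u : set T) : Prop :=
  is_proper_filter u /\
  (forall G : set T, is_proper_filter G -> (u `<=` G)%classic -> G = u).

Definition Ul : Type := {u : set T | is_ultrafilter u}.

Definition phi (F : set T) : set Ul := [set u : Ul | (F `<=` sval u)%classic].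

Variable imp : T -> T -> T.

Definition Dimp (u : Ul) (F : set T) : set T :=
  [set b | exists a, F a /\ sval u (imp a b)].

Definition TA3 (u : Ul) (Z : set Ul) (v : Ul) : Prop :=
  exists F : set T, is_filter F /\ Z = phi F /\ (Dimp u F `<=` sval v)%classic.

Definition TA (u : Ul) (Z : set Ul) : set Ul := [set v | TA3 u Z v].

Definition impT (U V : set Ul) : set Ul :=
  [set u | forall Z : set Ul, (Z `<=` U)%classic -> (TA u Z `<=` V)%classic].

End CanonicalExtension.

From HB Require Import structures.
From mathcomp Require Import all_boot all_order.
From mathcomp Require Import boolp classical_sets.
Import Order.Theory.

(* Everything is tested on ultrafilters: [u] lies in [impT U V] iff every
   [v] reached from [u] through some [phi F] with [phi F] inside [U] lies in
   [V], and reachability only asks [Dimp u F] to be contained in [v].  Taking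
   [F] to be an ultrafilter (so that [phi F] is a singleton) or a filter
   containing [\top] transfers C4, C5 and C7 directly from [A]; C8 is tested
   on [phi] of the join of [F] with [Dimp u (upset \top)].  C1* needs the
   ultrafilter lemma: a filter with empty [phi] is improper.  For C3* and C6
   one needs an ultrafilter [w] containing two filters at once; it exists as
   soon as no meet of their elements is [\bot], and that compatibility is
   exactly where the equation of [A] is used. *)

Set Implicit Arguments.
Unset Strict Implicit.
Unset Printing Implicit Defensive.

Local Open Scope order_scope.

Section Filters.
Context {d : Order.disp_t} {T : ctbDistrLatticeType d}.
Local Notation UlT := (@Ul d T).
Implicit Types (F G : set T) (a b : T) (u w : UlT).

Lemma filter_top F : is_filter F -> F \top.
Proof. by case. Qed.

Lemma filter_up F a b : is_filter F -> F a -> a <= b -> F b.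
Proof. by case=> _ + _; apply. Qed.

Lemma filter_meet F a b : is_filter F -> F a -> F b -> F (a `&` b).
Proof. by case=> _ _; apply. Qed.

Definition upset a : set T := [set x | a <= x].

Lemma is_filter_upset a : is_filter (upset a).
Proof.
split=> [|x y ax xy|x y ax ay]; rewrite /upset /=.
- exact: lex1.
- exact: le_trans xy.
- by rewrite lexI ax ay.
Qed.

Definition filter_join F G : set T :=
  [set x | exists f g, [/\ F f, G g & f `&` g <= x]].

Lemma is_filter_join F G : is_filter F -> is_filter G -> is_filter (filter_join F G).
Proof.
move=> fF fG; split.
- by exists \top, \top; split; [exact: filter_top|exact: filter_top|exact: lex1].
- by move=> x y [f [g [Ff Gg le]]] xy; exists f, g; split=> //; exact: le_trans xy.
- move=> x y [f1 [g1 [Ff1 Gg1 le1]]] [f2 [g2 [Ff2 Gg2 le2]]].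
  exists (f1 `&` f2), (g1 `&` g2); split; [exact: filter_meet|exact: filter_meet|].
  by rewrite meetACA; exact: leI2.
Qed.

Lemma sub_filter_joinl F G : is_filter G -> (F `<=` filter_join F G)%classic.
Proof. by move=> fG f Ff; exists f, \top; split; rewrite ?meetx1 //; exact: filter_top. Qed.

Lemma sub_filter_joinr F G : is_filter F -> (G `<=` filter_join F G)%classic.
Proof. by move=> fF g Gg; exists \top, g; split; rewrite ?meet1x //; exact: filter_top. Qed.

Lemma ultra_filter u : is_filter (sval u).
Proof. by case: u => ? [[]]. Qed.

Lemma ultra_proper u : ~ sval u \bot.
Proof. by case: u => ? [[]]. Qed.

Lemma ultra_max u G :
  is_proper_filter G -> (sval u `<=` G)%classic -> G = sval u.
Proof. by case: u => x /= [_ maxx]; exact: maxx. Qed.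

Lemma ultra_top u : sval u \top.
Proof. exact: filter_top (ultra_filter u). Qed.

Lemma ultra_up u a b : sval u a -> a <= b -> sval u b.
Proof. exact: filter_up (ultra_filter u). Qed.

Lemma ultra_meet u a b : sval u a -> sval u b -> sval u (a `&` b).
Proof. exact: filter_meet (ultra_filter u). Qed.

Lemma ultra_compl u a : sval u a \/ sval u (~` a).
Proof.
have [ua|nua] := pselect (sval u a); [by left | right].
have fG := is_filter_join (ultra_filter u) (is_filter_upset a).
have [[f [g [uf ag fg]]]|nG] := pselect (filter_join (sval u) (upset a) \bot).
  apply: ultra_up uf _; rewrite -disj_leC -lex0.
  by apply: le_trans fg; rewrite leI2.
have uG := sub_filter_joinl (F := sval u) (is_filter_upset a).
case: nua; rewrite -(ultra_max (conj fG nG) uG).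
by exists \top, a; split; [exact: ultra_top | exact: lexx | rewrite meet1x].
Qed.

Lemma ultra_not_compl u a : sval u a -> ~ sval u (~` a).
Proof. by move=> ua /(ultra_meet ua); rewrite meetxC; exact: ultra_proper. Qed.

Lemma ultra_join u a b : sval u (a `|` b) -> sval u a \/ sval u b.
Proof.
move=> uab; case: (ultra_compl u a) => [|na]; [by left|].
case: (ultra_compl u b) => [|nb]; [by right|].
by case: (ultra_not_compl uab); rewrite complU; exact: ultra_meet.
Qed.

Lemma Ul_inj u w : sval u = sval w -> u = w.
Proof. by case: u w => x ? [y ?] /=; exact: eq_exist. Qed.

Lemma phi_ultra w : phi (sval w) = [set w]%classic.
Proof.
apply/seteqP; split=> [v /= wv|v /= ->] //.
by apply: Ul_inj; apply: ultra_max wv; case: v => ? [].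
Qed.

Lemma bigcup_chain_proper_filter (C : set (set T)) X0 :
  C X0 -> is_filter X0 -> (forall X a, C X -> X a -> is_proper_filter X) ->
  total_on C subset -> is_proper_filter (\bigcup_(X in C) X)%classic.
Proof.
move=> CX0 fX0 Cp tot; split; last by case=> X CX /[dup] /(Cp _ _ CX) [].
have fC X a : C X -> X a -> is_filter X by move=> CX /(Cp _ _ CX) [].
split.
- by exists X0 => //; exact: filter_top.
- by move=> a b [X CX Xa] ab; exists X => //; exact: filter_up (fC _ _ CX Xa) Xa ab.
- move=> a b [X CX Xa] [Y CY Yb]; have [XY|YX] := tot X Y CX CY.
  + by exists Y => //; exact: filter_meet (fC _ _ CY Yb) (XY _ Xa) Yb.
  + by exists X => //; exact: filter_meet (fC _ _ CX Xa) Xa (YX _ Yb).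
Qed.

Lemma ultrafilter_ext F : is_proper_filter F -> exists w, (F `<=` sval w)%classic.
Proof.
move=> [fF nFbot].
pose P := [set X : set T | (is_proper_filter X /\ (F `<=` X)%classic) \/ X = set0]%classic.
have P_chain C : (C `<=` P)%classic -> total_on C subset ->
    P (\bigcup_(X in C) X)%classic.
  move=> CP tot; have Cp X a : C X -> X a -> is_proper_filter X.
    by move=> /CP [[]|->].
  have [[X0 [CX0 [[fX0 _] FX0]]]|noX] :=
    pselect (exists X, C X /\ is_proper_filter X /\ (F `<=` X)%classic).
    left; split; first exact: bigcup_chain_proper_filter CX0 fX0 Cp tot.
    by move=> x Fx; exists X0 => //; exact: FX0.
  right; apply/seteqP; split=> x // [X CX Xx]; move: (CP X CX) Xx => [PX|->] //.
  by case: noX; exists X.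
have [A [[[pA FA]|A0] maxA]] := Zorn_bigcup P_chain.
  have uA : is_ultrafilter A.
    split=> // G pG AG; apply/seteqP; split=> //.
    apply: contrapT => GA; apply: (maxA G); first by split.
    by left; split=> //; exact: subset_trans AG.
  by exists (exist _ A uA).
case: (maxA F); last by left; split=> //; split.
by rewrite A0; split=> // /(_ \top (filter_top fF)).
Qed.

Lemma ultra_sup F G : is_filter F -> is_filter G -> ~ filter_join F G \bot ->
  exists w, (F `<=` sval w)%classic /\ (G `<=` sval w)%classic.
Proof.
move=> fF fG nbot.
have [w Jw] := ultrafilter_ext (conj (is_filter_join fF fG) nbot).
by exists w; split; apply: subset_trans Jw;
  [exact: sub_filter_joinl | exact: sub_filter_joinr].
Qed.

End Filters.

Section CanonicalExtension.
Context {d : Order.disp_t} {T : ctbDistrLatticeType d}.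
Local Notation UlT := (@Ul d T).
Variable imp : T -> T -> T.
Local Notation "a ~> b" := (imp a b) (at level 55, right associativity).
Local Notation impT := (@impT d T imp).
Implicit Types (F G : set T) (a b c : T) (u v w : UlT) (U V W Z : set UlT).

Lemma imp_monor (h2 : C2 imp) a : {homo imp a : b c / b <= c}.
Proof. by move=> b c /meet_l <-; rewrite -h2 leIr. Qed.

Lemma imp_antil (h3 : C3 imp) c : {homo imp^~ c : a b /~ a <= b}.
Proof. by move=> a b /join_r <-; apply: le_trans (h3 _ _ _) _; exact: leIl. Qed.

Lemma is_filter_Dimp (hA : conditional_algebra imp) u F :
  is_filter F -> is_filter (Dimp imp u F).
Proof.
case: hA => h1 [h2 h3] fF; split.
- by exists \top; split; [exact: filter_top | rewrite h1; exact: ultra_top].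
- move=> b c [a [Fa uab]] bc; exists a; split=> //.
  by apply: ultra_up uab _; exact: imp_monor.
- move=> b c [a [Fa uab]] [a' [Fa' uac]]; exists (a `&` a'); split.
    exact: filter_meet.
  rewrite -h2; apply: ultra_meet.
  + by apply: ultra_up uab _; apply: imp_antil => //; exact: leIl.
  + by apply: ultra_up uac _; apply: imp_antil => //; exact: leIr.
Qed.

Lemma Dimp_top u F b : is_filter F -> sval u (\top ~> b) -> Dimp imp u F b.
Proof. by move=> fF utb; exists \top; split=> //; exact: filter_top. Qed.

Lemma TA_phi u v F :
  is_filter F -> (Dimp imp u F `<=` sval v)%classic -> TA imp u (phi F) v.
Proof. by move=> fF DF; exists F. Qed.

Lemma impT_single U V u v w : impT U V u -> U w ->
  (Dimp imp u (sval w) `<=` sval v)%classic -> V v.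
Proof.
move=> uUV Uw Dw; apply: (uUV [set w]%classic); first by move=> _ ->.
by rewrite -phi_ultra; exact: TA_phi (ultra_filter w) Dw.
Qed.

Lemma impT_C1 : C1 impT.
Proof. by move=> U; rewrite topEset; apply/seteqP; split=> // u _ Z _ v _. Qed.

Lemma impT_C2 : C2 impT.
Proof.
move=> U V W; rewrite meetEset; apply/seteqP; split=> u.
- by move=> [uV uW] Z ZU v Tv; split; [exact: uV ZU v Tv | exact: uW ZU v Tv].
- by move=> uVW; split=> Z ZU v Tv; have [] := uVW Z ZU v Tv.
Qed.

Lemma impT_C3 : C3 impT.
Proof.
move=> U V W; apply/subsetPset; rewrite joinEset meetEset.
by move=> u uUV; split=> Z ZU; apply: uUV => w /ZU; [left | right].
Qed.

Lemma impT_conditional_algebra : conditional_algebra impT.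
Proof. by split; [exact: impT_C1 | split; [exact: impT_C2 | exact: impT_C3]]. Qed.

Lemma impT_C1s (h1s : C1s imp) : C1s impT.
Proof.
move=> V; rewrite botEset topEset; apply/seteqP; split=> // u _ Z Z0 v.
case=> F [fF [eZ DF]]; case: (@ultra_proper _ _ v); apply: DF.
exists \bot; split; last by rewrite h1s; exact: ultra_top.
apply: contrapT => nFbot; have [w Fw] := ultrafilter_ext (conj fF nFbot).
by apply: (Z0 w); rewrite eZ.
Qed.

Definition escape_compl u v : set T :=
  [set x | exists a b, [/\ ~ sval v b, sval u (a ~> b) & ~` a <= x]].

Lemma is_filter_escape_compl (h2 : C2 imp) (h1s : C1s imp) (h3s : C3s imp) u v :
  is_filter (escape_compl u v).
Proof.
split.
- exists \bot, \bot; split; [exact: ultra_proper | | exact: lex1].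
  by rewrite h1s; exact: ultra_top.
- by move=> x y [a [b [vb uab ax]]] xy; exists a, b; split=> //; exact: le_trans xy.
- move=> x y [a [b [vb uab ax]]] [a' [b' [vb' uab' ay]]].
  exists (a `|` a'), (b `|` b'); split.
  + by case/ultra_join.
  + apply: ultra_up (h3s _ _ _); apply: ultra_meet.
    * by apply: ultra_up uab _; apply: imp_monor => //; exact: leUl.
    * by apply: ultra_up uab' _; apply: imp_monor => //; exact: leUr.
  + by rewrite complU leI2.
Qed.

Lemma Dimp_sub_escape_compl u v w : (escape_compl u v `<=` sval w)%classic ->
  (Dimp imp u (sval w) `<=` sval v)%classic.
Proof.
move=> cw b [a [wa uab]]; apply: contrapT => vb.
by apply: (ultra_not_compl wa); apply: cw; exists a, b.
Qed.

Lemma escape_compl_compatible u v F : is_filter F ->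
  (Dimp imp u F `<=` sval v)%classic -> ~ filter_join F (escape_compl u v) \bot.
Proof.
move=> fF DF [f [g [Ff [a [b [vb uab ag]]] fg]]]; apply: vb; apply: DF.
exists a; split=> //; apply: filter_up fF Ff _.
rewrite -[a]complK -disj_leC -lex0; apply: le_trans fg; exact: leI2.
Qed.

Lemma impT_C3s (h2 : C2 imp) (h1s : C1s imp) (h3s : C3s imp) :
  C3s impT.
Proof.
move=> U V W; apply/subsetPset; rewrite joinEset meetEset.
move=> u [uUW uVW] Z ZUV v [F [fF [eZ DF]]]; apply: contrapT => nWv.
have fC := is_filter_escape_compl h2 h1s h3s u v.
have [w [Fw Cw]] := ultra_sup fF fC (escape_compl_compatible fF DF).
have Dw := Dimp_sub_escape_compl Cw.
have : Z w by rewrite eZ.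
by case/ZUV => [Uw|Vw]; apply: nWv;
  [exact: impT_single uUW Uw Dw | exact: impT_single uVW Vw Dw].
Qed.

Lemma impT_PSB : PSB imp -> PSB impT.
Proof.
case=> [[_ [h2 _]] [h1s h3s]]; split; first exact: impT_conditional_algebra.
by split; [exact: impT_C1s | exact: impT_C3s].
Qed.

Lemma impT_C4 (h4 : C4 imp) : C4 impT.
Proof.
move=> U V W; apply/subsetPset => u uUV Z _ v [F [fF [_ DF]]] Z' Z'U v'.
case=> F' [fF' [eZ' DF']]; apply: (uUV Z' Z'U v'); exists F'; split=> //; split=> //.
move=> b [a [F'a uab]]; apply: DF'; exists a; split=> //.
by apply: DF; apply: Dimp_top fF _; exact: ultra_up uab (h4 _ _ _).
Qed.

Lemma impT_C5 (h5 : C5 imp) : C5 impT.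
Proof.
move=> U V; apply/subsetPset; rewrite meetEset => u [Uu uUV].
apply: impT_single uUV Uu _ => b [a [ua uab]].
exact: ultra_up (ultra_meet ua uab) (h5 a b).
Qed.

Lemma impT_C6 (hA : conditional_algebra imp) (h6 : C6 imp) : C6 impT.
Proof.
have h2 : C2 imp by case: hA => _ [].
move=> U V; apply/subsetPset; rewrite !complEset.
move=> u uUV Z ZnV v [F [fF [eZ DF]]] Uv.
have fD := is_filter_Dimp hA u (ultra_filter v).
have compat : ~ filter_join F (Dimp imp u (sval v)) \bot.
  move=> [f [g [Ff [a [va uag]] fg]]].
  have ufa : sval u (f ~> ~` a).
    have := h6 a (~` f); rewrite complK => /(ultra_up _); apply.
    by apply: ultra_up uag _; apply: imp_monor; rewrite // -disj_leC -lex0 meetC.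
  by apply: (ultra_not_compl va); apply: DF; exists f.
have [w [Fw Dw]] := ultra_sup fF fD compat.
have : Z w by rewrite eZ.
by move/ZnV; apply; exact: impT_single uUV Uv Dw.
Qed.

Lemma impT_C7 (h7 : C7 imp) : C7 impT.
Proof.
move=> U V W; apply/subsetPset; rewrite complEset.
move=> u nuUV Z _ v [F [fF [_ DF]]] vUV; apply: nuUV => Z' Z'U v'.
case=> F' [fF' [eZ' DF']]; apply: (vUV Z' Z'U v'); exists F'; split=> //; split=> //.
move=> b [a [F'a vab]]; apply: contrapT => nb.
have [uab|unab] := ultra_compl u (a ~> b); first by apply: nb; apply: DF'; exists a.
apply: (ultra_not_compl vab); apply: DF; apply: Dimp_top fF _.
exact: ultra_up unab (h7 _ _ _).
Qed.

Lemma impT_C8 (hA : conditional_algebra imp) (h8 : C8 imp) : C8 impT.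
Proof.
have [h2 h3] : C2 imp /\ C3 imp by case: hA => _.
move=> U V W; apply/subsetPset; rewrite topEset meetEset joinEset complEset.
move=> u [uTnUV uVW] Z ZU v [F [fF [eZ DF]]].
pose H := Dimp imp u (upset \top).
have fH : is_filter H := is_filter_Dimp hA u (is_filter_upset \top).
have fG := is_filter_join fF fH.
apply: (uVW _ _ v (TA_phi fG _)).
- move=> w /= Gw.
  have Uw : U w by apply: ZU; rewrite eZ; apply: subset_trans Gw; exact: sub_filter_joinl.
  have : (~` U `|` V)%classic w.
    apply: (uTnUV _ (@subsetT _ _) w); apply: TA_phi (is_filter_upset \top) _.
    by apply: subset_trans Gw; exact: sub_filter_joinr.
  by case.
- move=> c [g [[f [k [Ff [t [/= tt ukt] fkg]]]] ugc]].
  move: tt ukt; rewrite /upset /= le1x => /eqP -> ukt.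
  apply: DF; exists f; split=> //.
  (* C8 with [b := f `&` k], as [k <= ~` f `|` (f `&` k)]. *)
  apply: ultra_up (h8 f (f `&` k) c); apply: ultra_meet.
  + apply: ultra_up ukt _; apply: imp_monor => //.
    by rewrite joinIr joinCx meet1x leUr.
  + by apply: ultra_up ugc _; exact: imp_antil.
Qed.

End CanonicalExtension.

Theorem corollary9p10 (d : Order.disp_t) (A : ctbDistrLatticeType d)
    (imp : A -> A -> A) :
  (PSB imp -> PSB (@impT d A imp)) /\
  (PsC imp -> PsC (@impT d A imp)) /\
  (SIA imp -> SIA (@impT d A imp)) /\
  (S2IA imp -> S2IA (@impT d A imp)).
Proof.
split; first exact: impT_PSB.
split; last split.
- case=> hP [h5 h6]; split; first exact: impT_PSB.
  by split; [exact: impT_C5 | exact: impT_C6 hP.1 h6].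
- case=> hP [h4 [h5 [h7 h8]]]; split; first exact: impT_PSB.
  split; first exact: impT_C4.
  by split; [exact: impT_C5 | split; [exact: impT_C7 | exact: impT_C8 hP.1 h8]].
- case=> hP [h4 [h5 [h6 h7]]]; split; first exact: impT_PSB.
  split; first exact: impT_C4.
  by split; [exact: impT_C5 | split; [exact: impT_C6 hP.1 h6 | exact: impT_C7]].
Qed.
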